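(* There is no split graph $(S,K,I)$ such that the factor graph $\Phi(S)$ contains an induced path $v_5v_4v_1v_2v_3$ (on five distinct vertices, in this order along the path) with $\max\{d_i: i\in[5]\}=d_1$.
   Context: A split graph $(S,K,I)$ is a graph $S$ together with a fixed partition $V(S)=K\dot\cup I$, where $K$ is a clique and $I$ is an independent set. For a vertex $v_i$ of $S$, $N_i$ denotes its open neighborhood in $S$ and $d_i=|N_i|$ its degree in $S$; for $u,v$ write $\eta_{uv}=|N_u\cap N_v|$. The factor graph $\Phi(S)$ is the loopless multigraph with vertex set $I$ in which, for distinct $u,v\in I$, there is one edge joining $u$ and $v$ for each 2-switch of $S$ acting on $u$ and $v$ (a 2-switch replaces edges $ab,cd$ with $ac,bd$ when $ab,cd\in E(S)$ and $ac,bd\notin E(S)$); equivalently, the multiplicity of the edge $uv$ is $\sigma_{uv}=(d_u-\eta_{uv})(d_v-\eta_{uv})$, and $u,v$ are adjacent iff $\sigma_{uv}>0$. An induced path in $\Phi(S)$ consists of distinct vertices, consecutive ones adjacent and no other pair adjacent (multiplicities ignored for adjacency). *)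

From mathcomp Require Import all_boot.
Set Implicit Arguments. Unset Strict Implicit. Unset Printing Implicit Defensive.

Definition simple_graph (T : finType) (e : rel T) : Prop :=
  symmetric e /\ irreflexive e.

Definition split_graph (T : finType) (e : rel T) (K I : {set T}) : Prop :=
  [/\ simple_graph e,
      K :&: I = set0,
      K :|: I = [set: T],
      {in K &, forall x y, x != y -> e x y}
    & {in I &, forall x y, ~~ e x y}].

Section FactorGraph.
Variables (T : finType) (e : rel T).

Definition nbhd (v : T) : {set T} := [set w | e v w].
Definition deg (v : T) : nat := #|nbhd v|.
Definition eta (u v : T) : nat := #|nbhd u :&: nbhd v|.
(* multiplicity of the edge uv in the factor graph *)
Definition sigma (u v : T) : nat := (deg u - eta u v) * (deg v - eta u v).

Definition phi_adj (I : {set T}) (u v : T) : bool :=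
  [&& u \in I, v \in I, u != v & 0 < sigma u v].

Definition phi_induced_path (I : {set T}) (p : seq T) : Prop :=
  [/\ uniq p, all (fun x => x \in I) p &
      forall (x0 : T) (i j : nat), i < j -> j < size p ->
        phi_adj I (nth x0 p i) (nth x0 p j) = (j == i.+1)].
End FactorGraph.

(* Two distinct vertices u, v are adjacent in the factor graph exactly when
   their neighbourhoods are incomparable under inclusion, since
   d_u - eta_uv = |N_u \ N_v|.  As d_1 is maximal, the non-edges v1v3 and
   v1v5 force N_3, N_5 to lie in N_1; then the non-edges v3v4 and v5v2 force
   N_3 in N_4 and N_5 in N_2 (the other inclusions would put N_4 or N_2 in
   N_1).  Whichever way N_2 and N_4 compare, we get N_3 in N_2 or N_5 in N_4,
   contradicting the edge v2v3 or v4v5. *)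

From mathcomp Require Import all_boot.

Set Implicit Arguments.
Unset Strict Implicit.
Unset Printing Implicit Defensive.

Section NeighbourhoodComparability.
Variables (T : finType) (e : rel T).

Lemma subn_deg_eta_eq0 (u v : T) :
  (deg e u - eta e u v == 0) = (nbhd e u \subset nbhd e v).
Proof.
rewrite subn_eq0 /deg /eta; apply/idP/idP => [le_u_uv | /setIidPl -> //].
by apply/setIidPl/eqP; rewrite eqEcard subsetIl le_u_uv.
Qed.

Lemma sigma_eq0 (u v : T) :
  (sigma e u v == 0) = (nbhd e u \subset nbhd e v) || (nbhd e v \subset nbhd e u).
Proof. by rewrite /sigma muln_eq0 subn_deg_eta_eq0 /eta setIC subn_deg_eta_eq0. Qed.

Lemma phi_adjE (I : {set T}) (u v : T) : u \in I -> v \in I -> u != v ->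
  phi_adj e I u v = ~~ ((nbhd e u \subset nbhd e v) || (nbhd e v \subset nbhd e u)).
Proof. by move=> uI vI neq_uv; rewrite /phi_adj uI vI neq_uv lt0n sigma_eq0. Qed.

Lemma induced_path_nbhd_cmp (I : {set T}) (p : seq T) :
  phi_induced_path e I p -> forall (x0 : T) (i j : nat), i < j -> j < size p ->
  (nbhd e (nth x0 p i) \subset nbhd e (nth x0 p j))
    || (nbhd e (nth x0 p j) \subset nbhd e (nth x0 p i)) = (j != i.+1).
Proof.
move=> [uniq_p /allP pI adj_p] x0 i j lt_ij lt_jp; have lt_ip := ltn_trans lt_ij lt_jp.
rewrite -(adj_p x0) // phi_adjE ?negbK ?pI ?mem_nth //.
by rewrite nth_uniq // neq_ltn lt_ij.
Qed.

Lemma nbhd_sub_of_cmp_deg (u v : T) :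
  (nbhd e u \subset nbhd e v) || (nbhd e v \subset nbhd e u) ->
  deg e u <= deg e v -> nbhd e u \subset nbhd e v.
Proof.
case/orP=> [// | sub_vu le_uv].
by have /eqP -> : nbhd e v == nbhd e u by rewrite eqEcard sub_vu.
Qed.

End NeighbourhoodComparability.

Theorem lemma2p3 :
  forall (T : finType) (e : rel T) (K I : {set T}) (v1 v2 v3 v4 v5 : T),
    split_graph e K I ->
    phi_induced_path e I [:: v5; v4; v1; v2; v3] ->
    (forall x, x \in [:: v1; v2; v3; v4; v5] -> deg e x <= deg e v1) ->
    False.
Proof.
move=> T e K I v1 v2 v3 v4 v5 _ path_p deg_max.
have cmp := induced_path_nbhd_cmp path_p v1.
have /= c54 := cmp 0 1 erefl erefl; have /= c51 := cmp 0 2 erefl erefl.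
have /= c52 := cmp 0 3 erefl erefl; have /= c41 := cmp 1 2 erefl erefl.
have /= c42 := cmp 1 3 erefl erefl; have /= c43 := cmp 1 4 erefl erefl.
have /= c12 := cmp 2 3 erefl erefl; have /= c13 := cmp 2 4 erefl erefl.
have /= c23 := cmp 3 4 erefl erefl.
have sub31 : nbhd e v3 \subset nbhd e v1.
  apply: nbhd_sub_of_cmp_deg; first by rewrite orbC c13.
  by apply: deg_max; rewrite !inE eqxx !orbT.
have sub51 : nbhd e v5 \subset nbhd e v1.
  apply: nbhd_sub_of_cmp_deg; first by rewrite c51.
  by apply: deg_max; rewrite !inE eqxx !orbT.
have sub34 : nbhd e v3 \subset nbhd e v4.
  case/orP: (c43) => [sub43 | //].
  by move: c41; rewrite (subset_trans sub43 sub31).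
have sub52 : nbhd e v5 \subset nbhd e v2.
  case/orP: (c52) => [// | sub25].
  by move: c12; rewrite (subset_trans sub25 sub51) orbT.
case/orP: (c42) => [sub42 | sub24].
  by move: c23; rewrite (subset_trans sub34 sub42) orbT.
by move: c54; rewrite (subset_trans sub52 sub24).
Qed.
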